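(* Let $\boldsymbol\Delta=(\Delta_1,\dots,\Delta_9)$ be a probability vector, let $p_1,p_2,\dots\in[0,1]$, and let $X_1,X_2,\dots$ be independent random joint genotypes with $X_i$ taking values $x\in\{0000,1111,1101,0111,0101,1100,0011,0100,0001\}$ with probabilities $f^{(i)}_x$ given, with $p=p_i$, $q=1-p_i$, by \begin{align*} f_{0000} &= q\Delta_1 + q^2(\Delta_2+\Delta_3+\Delta_5+\Delta_7)+q^3(\Delta_4+\Delta_6+\Delta_8)+q^4\Delta_9,\\ f_{1111} &= p\Delta_1 + p^2(\Delta_2+\Delta_3+\Delta_5+\Delta_7)+p^3(\Delta_4+\Delta_6+\Delta_8)+p^4\Delta_9,\\ f_{1101} &= pq\bigl(\Delta_3 + p(\Delta_8+2\Delta_4+2p\Delta_9)\bigr),\quad f_{0111} = pq\bigl(\Delta_5 + p(\Delta_8+2\Delta_6+2p\Delta_9)\bigr),\\ f_{0101} &= pq\bigl(2\Delta_7+q\Delta_8+4pq\Delta_9\bigr),\\ f_{1100} &= pq\bigl(\Delta_2+q\Delta_4+p\Delta_6+pq\Delta_9\bigr),\quad f_{0011} = pq\bigl(\Delta_2+q\Delta_6+p\Delta_4+pq\Delta_9\bigr),\\ f_{0100} &= pq\bigl(\Delta_5+q\Delta_8+2q\Delta_6+2q^2\Delta_9\bigr),\quad f_{0001} = pq\bigl(\Delta_3+q\Delta_8+2q\Delta_4+2q^2\Delta_9\bigr). \end{align*} For each $n$ let $\hat f_x=\frac1n\sum_{i=1}^n\mathbf 1\{X_i=x\}$ and define \begin{align*}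 \hat\tau_{1\mathrm A}&=\tfrac12(\hat f_{1101}+\hat f_{0100})+\tfrac14\hat f_{0101}+\hat f_{1100}, & \hat\tau_{1\mathrm B}&=\tfrac12(\hat f_{0111}+\hat f_{0001})+\tfrac14\hat f_{0101}+\hat f_{0011},\\ \hat\tau_1&=\tfrac12(\hat\tau_{1\mathrm A}+\hat\tau_{1\mathrm B}),\\ \hat\tau_{2\mathrm A}&=\tfrac12(\hat f_{0111}+\hat f_{0101}+\hat f_{0100}), & \hat\tau_{2\mathrm B}&=\tfrac12(\hat f_{1101}+\hat f_{0101}+\hat f_{0001}),\\ \hat\tau_3&=\tfrac14\bigl((\hat f_{0100}-\hat f_{0111})+(\hat f_{0001}-\hat f_{1101})\bigr), & \hat\tau_4&=\tfrac12(\hat f_{1100}-\hat f_{0011}), \end{align*} $\bar\nu_2=\frac1n\sum_{i=1}^n p_i(1-p_i)$, $\bar\nu_3=\frac1n\sum_{i=1}^n p_i(1-p_i)(1-2p_i)$, and the estimators \[ \hat\theta_1=1-\frac{\hat\tau_1}{\bar\nu_2},\quad \hat\theta_{2\mathrm A}=1-\frac{\hat\tau_{2\mathrm A}}{\bar\nu_2},\quad \hat\theta_{2\mathrm B}=1-\frac{\hat\tau_{2\mathrm B}}{\bar\nu_2},\quad \hat\theta_3=1-\frac{\hat\tau_3}{\bar\nu_3},\quad \hat\theta_4=\frac{\hat\tau_4}{\bar\nu_3}. \] Suppose there exist constants $\nu_2,\nu_3$ with $\nu_2\neq0$ and $\nu_3\neq0$ such that $\bar\nu_2\to\nu_2$ and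 $\bar\nu_3\to\nu_3$ in probability as $n\to\infty$. Then $\hat\theta_y\to\theta_y$ in probability as $n\to\infty$ for each $y\in\{1,2\mathrm A,2\mathrm B,3,4\}$, where \begin{align*} \theta_1&=\Delta_1+\tfrac12(\Delta_3+\Delta_5+\Delta_7)+\tfrac14\Delta_8,\quad \theta_{2\mathrm A}=\Delta_1+\Delta_2+\Delta_3+\Delta_4,\quad \theta_{2\mathrm B}=\Delta_1+\Delta_2+\Delta_5+\Delta_6,\\ \theta_3&=\Delta_1+\Delta_2+\Delta_3+\Delta_5+\Delta_7+\tfrac12(\Delta_4+\Delta_6+\Delta_8),\quad \theta_4=\tfrac12(\Delta_4-\Delta_6). \end{align*}
   Context: $\boldsymbol\Delta$ is the vector of Jacquard's identity coefficients (probabilities of the nine identity-by-descent modes) for a pair of diploid individuals A, B, common to all loci; $p_i$ is the frequency of allele 1 at the $i$-th independent biallelic locus. The genotype label $abcd$ means A has unordered genotype $a/b$ and B has unordered genotype $c/d$ (e.g. $1101$: A is $1/1$, B is $0/1$). *)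

From HB Require Import structures.
From mathcomp Require Import all_boot all_order all_algebra.
From mathcomp Require Import all_classical all_reals all_analysis.
Set Implicit Arguments. Unset Strict Implicit. Unset Printing Implicit Defensive.
Import Order.TTheory GRing.Theory Num.Theory.
Import numFieldNormedType.Exports.
Local Open Scope classical_set_scope.
Local Open Scope ring_scope.

(* The nine joint genotypes abcd: A has genotype a/b, B has genotype c/d. *)
Inductive genotype : Type :=
  G0000 | G1111 | G1101 | G0111 | G0101 | G1100 | G0011 | G0100 | G0001.

Section Defs.
Variable R : realType.

(* Delta is indexed 1..9 : Delta k = Δ_k. *)
Definition prob_vector9 (Delta : nat -> R) : Prop :=
  (forall k, (1 <= k <= 9)%N -> 0 <= Delta k) /\
  \sum_(1 <= k < 10) Delta k = 1.

Definition freq (Delta : nat -> R) (p : R) (x : genotype) : R :=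
  let q := 1 - p in
  let D := Delta in
  match x with
  | G0000 => q * D 1%N + q ^+ 2 * (D 2%N + D 3%N + D 5%N + D 7%N)
             + q ^+ 3 * (D 4%N + D 6%N + D 8%N) + q ^+ 4 * D 9%N
  | G1111 => p * D 1%N + p ^+ 2 * (D 2%N + D 3%N + D 5%N + D 7%N)
             + p ^+ 3 * (D 4%N + D 6%N + D 8%N) + p ^+ 4 * D 9%N
  | G1101 => p * q * (D 3%N + p * (D 8%N + 2 * D 4%N + 2 * p * D 9%N))
  | G0111 => p * q * (D 5%N + p * (D 8%N + 2 * D 6%N + 2 * p * D 9%N))
  | G0101 => p * q * (2 * D 7%N + q * D 8%N + 4 * p * q * D 9%N)
  | G1100 => p * q * (D 2%N + q * D 4%N + p * D 6%N + p * q * D 9%N)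
  | G0011 => p * q * (D 2%N + q * D 6%N + p * D 4%N + p * q * D 9%N)
  | G0100 => p * q * (D 5%N + q * D 8%N + 2 * q * D 6%N + 2 * q ^+ 2 * D 9%N)
  | G0001 => p * q * (D 3%N + q * D 8%N + 2 * q * D 4%N + 2 * q ^+ 2 * D 9%N)
  end.

Definition theta1 (D : nat -> R) : R :=
  D 1%N + 2^-1 * (D 3%N + D 5%N + D 7%N) + 4^-1 * D 8%N.
Definition theta2A (D : nat -> R) : R := D 1%N + D 2%N + D 3%N + D 4%N.
Definition theta2B (D : nat -> R) : R := D 1%N + D 2%N + D 5%N + D 6%N.
Definition theta3 (D : nat -> R) : R :=
  D 1%N + D 2%N + D 3%N + D 5%N + D 7%N + 2^-1 * (D 4%N + D 6%N + D 8%N).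
Definition theta4 (D : nat -> R) : R := 2^-1 * (D 4%N - D 6%N).

Definition nubar2 (p : nat -> R) (n : nat) : R :=
  n%:R^-1 * \sum_(i < n) p i * (1 - p i).
Definition nubar3 (p : nat -> R) (n : nat) : R :=
  n%:R^-1 * \sum_(i < n) p i * (1 - p i) * (1 - 2 * p i).

Variables (T : Type).
Implicit Types (X : nat -> T -> genotype).

(* empirical frequency \hat f_x based on X_0, ..., X_{n-1} *)
Definition fhat X (n : nat) (x : genotype) (w : T) : R :=
  n%:R^-1 * \sum_(i < n) (\1_(X i @^-1` [set x]) w : R).

Definition tau1A X n w := 2^-1 * (fhat X n G1101 w + fhat X n G0100 w)
  + 4^-1 * fhat X n G0101 w + fhat X n G1100 w.
Definition tau1B X n w := 2^-1 * (fhat X n G0111 w + fhat X n G0001 w)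
  + 4^-1 * fhat X n G0101 w + fhat X n G0011 w.
Definition tau1 X n w := 2^-1 * (tau1A X n w + tau1B X n w).
Definition tau2A X n w :=
  2^-1 * (fhat X n G0111 w + fhat X n G0101 w + fhat X n G0100 w).
Definition tau2B X n w :=
  2^-1 * (fhat X n G1101 w + fhat X n G0101 w + fhat X n G0001 w).
Definition tau3 X n w := 4^-1 * ((fhat X n G0100 w - fhat X n G0111 w)
  + (fhat X n G0001 w - fhat X n G1101 w)).
Definition tau4 X n w := 2^-1 * (fhat X n G1100 w - fhat X n G0011 w).

Definition theta1hat (p : nat -> R) X n w := 1 - tau1 X n w / nubar2 p n.
Definition theta2Ahat (p : nat -> R) X n w := 1 - tau2A X n w / nubar2 p n.
Definition theta2Bhat (p : nat -> R) X n w := 1 - tau2B X n w / nubar2 p n.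
Definition theta3hat (p : nat -> R) X n w := 1 - tau3 X n w / nubar3 p n.
Definition theta4hat (p : nat -> R) X n w := tau4 X n w / nubar3 p n.
End Defs.

Section Prob.
Context {d : measure_display} {T : measurableType d} {R : realType}.
Variable P : probability T R.

Definition discrete_RVs (X : nat -> T -> genotype) : Prop :=
  forall i x, measurable (X i @^-1` [set x]).

Definition mutually_independent (X : nat -> T -> genotype) : Prop :=
  forall (I : seq nat) (x : nat -> genotype), uniq I ->
    P [set w | forall i, i \in I -> X i w = x i] =
    (\prod_(i <- I) P (X i @^-1` [set x i]))%E.

Definition cvg_in_prob (Y : nat -> T -> R) (c : R) : Prop :=
  forall eps : R, 0 < eps ->
    P [set w | eps <= `|Y n w - c|] @[n --> \oo] --> 0%E.
End Prob.

(* Each estimator is an affine function of tau / nubar, where tau is the sample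
   mean of a bounded score of the independent genotypes X_i whose expectation
   under the model is c * p_i (1 - p_i), or c * p_i (1 - p_i) (1 - 2 p_i), with c
   an affine function of theta; hence E tau = c * nubar.  By independence the
   variance of a sum of centred scores is the sum of the variances, so Chebyshev's
   inequality gives tau - c * nubar -> 0 in probability, and since nubar stays
   away from 0 for large n, tau / nubar -> c. *)

From HB Require Import structures.
From mathcomp Require Import all_boot all_order all_algebra.
From mathcomp Require Import all_classical all_reals all_analysis.
From mathcomp Require Import ring lra.
Import Order.TTheory GRing.Theory Num.Theory.
Import numFieldNormedType.Exports.
Local Open Scope classical_set_scope.
Local Open Scope ring_scope.
Set Implicit Arguments. Unset Strict Implicit. Unset Printing Implicit Defensive.

Lemma cvg_invn (R : realType) : (n%:R^-1 : R) @[n --> \oo] --> 0.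
Proof.
have n_gt0 : \forall n \near \oo, 0 < n%:R :> R.
  by near=> n; rewrite ltr0n; near: n; exists 1%N.
exact/(gtr0_cvgV0 n_gt0).2/cvgr_idn.
Unshelve. all: by end_near.
Qed.

Section FinitelyValued.
Variables (d : measure_display) (T : measurableType d) (R : realType).
Variable mu : {measure set T -> \bar R}.
Variables (S : finType) (Y : T -> S).
Hypothesis Y_meas : forall y, measurable (Y @^-1` [set y]).

Lemma measure_preimage_seq (s : seq S) : uniq s ->
  measurable [set w | Y w \in s] /\
  mu [set w | Y w \in s] = \sum_(y <- s) mu (Y @^-1` [set y]).
Proof.
elim: s => [_|y s IH /= /andP[ys /IH[s_meas mu_s]]].
  by rewrite big_nil (_ : [set w | _] = set0) ?measure0 //; apply/seteqP; split.
have -> : [set w | Y w \in y :: s] = Y @^-1` [set y] `|` [set w | Y w \in s].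
  apply/seteqP; split => w /=; rewrite in_cons; first by case/predU1P; [left|right].
  by case=> ->; rewrite ?eqxx ?orbT.
split; first exact: measurableU.
rewrite measureU ?big_cons -?mu_s //.
by apply/seteqP; split => w // [/= Yw]; rewrite Yw (negbTE ys).
Qed.

Lemma measure_preimage_pred (Q : pred S) :
  mu [set w | Q (Y w)] = \sum_(y | Q y) mu (Y @^-1` [set y]).
Proof.
have [_ mu_enum] := measure_preimage_seq (enum_uniq Q).
rewrite -big_enum -mu_enum.
by congr (mu _); apply/seteqP; split => w /=; rewrite mem_enum.
Qed.

End FinitelyValued.

Lemma sum_tail_le_second_moment (R : realFieldType) (I : finType) (w h : I -> R)
    (eps : R) : 0 < eps -> (forall t, 0 <= w t) ->
  \sum_(t | eps <= `|h t|) w t <= eps ^- 2 * \sum_t w t * h t ^+ 2.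
Proof.
move=> eps_gt0 w_ge0.
rewrite mulr_sumr [X in _ <= X](bigID (fun t => eps <= `|h t|)) /=.
rewrite -[X in X <= _]addr0 lerD //; last first.
  apply: sumr_ge0 => t _.
  by rewrite mulr_ge0 ?invr_ge0 ?sqr_ge0 // mulr_ge0 ?w_ge0 // sqr_ge0.
apply: ler_sum => t eps_le; rewrite mulrCA -[X in X <= _]mulr1 ler_wpM2l //.
rewrite ler_pdivlMl ?exprn_gt0 // mulr1 -[h t ^+ 2]real_normK ?num_real //.
by rewrite lerXn2r ?nnegrE ?(ltW eps_gt0).
Qed.

Definition avg (R : unitRingType) (w : nat -> R) n := n%:R^-1 * \sum_(i < n) w i.

(* [`|b| + 1] rather than [`|b|] spares a separate case [b = 0]. *)
Lemma le_deviation_ratio (R : realFieldType) (b c y z nu eps : R) :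
  0 < eps -> `|nu| / 2 < `|z| -> eps <= `|b * (y / z - c)| ->
  eps * `|nu| / (2 * (`|b| + 1)) <= `|y - c * z|.
Proof.
move=> eps_gt0 nu_lt_z; have z_neq0 : z != 0.
  by rewrite -normr_gt0; apply: le_lt_trans nu_lt_z; rewrite divr_ge0.
have -> : b * (y / z - c) = b * (y - c * z) / z by field.
rewrite normrM normfV normrM ler_pdivlMr ?normr_gt0 // => eps_le.
have b_ge0 := normr_ge0 b; rewrite ler_pdivrMr; last by lra.
by have := normr_ge0 (y - c * z); have := normr_ge0 nu; nra.
Qed.

Section IndependentSample.
Variables (d : measure_display) (T : measurableType d) (R : realType).
Variable P : probability T R.
Variables (G : finType) (X : nat -> T -> G) (f : nat -> G -> R).
Hypothesis X_meas : forall i x, measurable (X i @^-1` [set x]).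
Hypothesis X_indep : forall (I : seq nat) (x : nat -> G), uniq I ->
  P [set w | forall i, i \in I -> X i w = x i] =
  (\prod_(i <- I) P (X i @^-1` [set x i]))%E.
Hypothesis X_mass : forall i x, P (X i @^-1` [set x]) = (f i x)%:E.

Definition sample n w : {ffun 'I_n -> G} := [ffun i : 'I_n => X i w].
Definition tuple_prob n (t : {ffun 'I_n -> G}) := \prod_(i < n) f i (t i).

(* Outside ['I_n] the value is irrelevant; [X 0 point] merely supplies an element
   of [G]. *)
Definition extend n (t : {ffun 'I_n -> G}) (i : nat) : G :=
  if insub i is Some j then t j else X 0 point.

Lemma extend_ord n (t : {ffun 'I_n -> G}) (i : 'I_n) : extend t i = t i.
Proof. by rewrite /extend valK. Qed.

Lemma sample_preimage n t :
  sample n @^-1` [set t] =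
  [set w | forall i, i \in index_iota 0 n -> X i w = extend t i].
Proof.
apply/seteqP; split => w /=.
  move=> <- i; rewrite mem_index_iota => i_lt.
  by rewrite -[i]/(val (Ordinal i_lt)) extend_ord ffunE.
move=> Xw; apply/ffunP => i; rewrite ffunE -extend_ord; apply: Xw.
by rewrite mem_index_iota ltn_ord.
Qed.

Lemma measurable_sample n t : measurable (sample n @^-1` [set t]).
Proof.
rewrite sample_preimage.
rewrite (_ : [set w | _] =
  \bigcap_(i in [set i | i \in index_iota 0 n]) X i @^-1` [set extend t i]).
  by apply: bigcap_measurableType => i _; apply: X_meas.
by apply/seteqP; split => w /= Xw i; apply: Xw.
Qed.

Lemma prob_sample1 n t : P (sample n @^-1` [set t]) = (tuple_prob t)%:E.
Proof.
rewrite sample_preimage X_indep ?iota_uniq // big_mkord.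
under eq_bigr do rewrite X_mass extend_ord.
by rewrite prodEFin.
Qed.

Lemma prob_sample_pred n (Q : pred {ffun 'I_n -> G}) :
  P [set w | Q (sample n w)] = (\sum_(t | Q t) tuple_prob t)%:E.
Proof.
rewrite measure_preimage_pred; last exact: measurable_sample.
by rewrite -sumEFin; apply: eq_bigr => t _; apply: prob_sample1.
Qed.

Lemma mass_ge0 i x : 0 <= f i x.
Proof. by rewrite -lee_fin -X_mass measure_ge0. Qed.

Lemma sum_mass i : \sum_x f i x = 1.
Proof.
apply: EFin_inj; rewrite -sumEFin -(probability_setT P).
under eq_bigr do rewrite -X_mass.
rewrite -(measure_preimage_pred _ (X_meas i) predT).
by congr (P _); apply/seteqP; split.
Qed.

Lemma mass_le1 i x : f i x <= 1.
Proof.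
rewrite -(sum_mass i) (bigD1 x) //= lerDl.
by apply: sumr_ge0 => y _; apply: mass_ge0.
Qed.

Lemma tuple_prob_ge0 n (t : {ffun 'I_n -> G}) : 0 <= tuple_prob t.
Proof. by apply: prodr_ge0 => i _; apply: mass_ge0. Qed.

Lemma sum_tuple_prob_prod n (F : 'I_n -> G -> R) :
  \sum_(t : {ffun 'I_n -> G}) tuple_prob t * \prod_(k < n) F k (t k) =
  \prod_(k < n) \sum_x f k x * F k x.
Proof. by rewrite bigA_distr_bigA; apply: eq_bigr => t _; rewrite big_split. Qed.

Definition mean (g : G -> R) i := \sum_x f i x * g x.

Lemma sum_mass_centered g i : \sum_x f i x * (g x - mean g i) = 0.
Proof.
under eq_bigr do rewrite mulrBr.
by rewrite sumrB -mulr_suml sum_mass mul1r subrr.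
Qed.

Lemma sum_tuple_prob_centered_mul n g (i j : 'I_n) :
  \sum_(t : {ffun 'I_n -> G})
    tuple_prob t * ((g (t i) - mean g i) * (g (t j) - mean g j)) =
  if i == j then \sum_x f i x * (g x - mean g i) ^+ 2 else 0.
Proof.
pose F k x := (if k == i then g x - mean g i else 1) *
              (if k == j then g x - mean g j else 1).
transitivity (\prod_(k < n) \sum_x f k x * F k x).
  rewrite -sum_tuple_prob_prod; apply: eq_bigr => t _.
  by rewrite big_split /= -!big_mkcond !big_pred1_eq.
rewrite (bigD1 i) //=; case: eqVneq => [ij|ij]; first subst j.
  rewrite [\prod_(k < n | k != i) _]big1 ?mulr1 => [|k /negbTE ki]; last first.
    by under eq_bigr do rewrite /F ki mulr1 mulr1; rewrite sum_mass.
  by apply: eq_bigr => x _; rewrite /F eqxx expr2.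
rewrite (_ : \sum_x _ = 0) ?mul0r //; apply: etrans (sum_mass_centered g i).
by apply: eq_bigr => x _; rewrite /F eqxx (negbTE ij) mulr1.
Qed.

Lemma variance_le_sum_sqr g i :
  \sum_x f i x * (g x - mean g i) ^+ 2 <= \sum_x g x ^+ 2.
Proof.
have -> : \sum_x f i x * (g x - mean g i) ^+ 2 =
          \sum_x f i x * g x ^+ 2 - mean g i ^+ 2.
  transitivity (\sum_x (f i x * g x ^+ 2 - mean g i *+ 2 * (f i x * g x)
                        + mean g i ^+ 2 * f i x)).
    by apply: eq_bigr => x _; ring.
  by rewrite !big_split /= sumrN -!mulr_sumr sum_mass -/(mean g i); ring.
have moment_le : \sum_x f i x * g x ^+ 2 <= \sum_x g x ^+ 2.
  apply: ler_sum => x _; rewrite -[leRHS]mul1r ler_wpM2r ?sqr_ge0 //.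
  exact: mass_le1.
by have := sqr_ge0 (mean g i); lra.
Qed.

Lemma sum_tuple_prob_sqr_centered_sum n g :
  \sum_(t : {ffun 'I_n -> G}) tuple_prob t * (\sum_(i < n) (g (t i) - mean g i)) ^+ 2
  <= n%:R * \sum_x g x ^+ 2.
Proof.
have -> : \sum_(t : {ffun 'I_n -> G})
    tuple_prob t * (\sum_(i < n) (g (t i) - mean g i)) ^+ 2 =
  \sum_(i < n) \sum_(j < n) \sum_(t : {ffun 'I_n -> G})
    tuple_prob t * ((g (t i) - mean g i) * (g (t j) - mean g j)).
  under [RHS]eq_bigr do rewrite exchange_big /=.
  rewrite exchange_big /=; apply: eq_bigr => t _.
  rewrite expr2 mulr_suml mulr_sumr; apply: eq_bigr => i _.
  by rewrite !mulr_sumr.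
under eq_bigr do under eq_bigr do rewrite sum_tuple_prob_centered_mul.
rewrite mulr_natl -[in leRHS](card_ord n) -sumr_const; apply: ler_sum => i _.
rewrite (bigD1 i) //= eqxx [\sum_(j < n | j != i) _]big1 ?addr0.
  exact: variance_le_sum_sqr.
by move=> j /negbTE; rewrite eq_sym => ->.
Qed.

Definition sample_mean n (g : G -> R) (t : {ffun 'I_n -> G}) :=
  n%:R^-1 * \sum_(i < n) g (t i).

Lemma sample_mean_tail_le n g eps : 0 < eps -> (0 < n)%N ->
  \sum_(t : {ffun 'I_n -> G} | eps <= `|sample_mean g t - avg (mean g) n|) tuple_prob t
  <= (\sum_x g x ^+ 2) / (n%:R * eps ^+ 2).
Proof.
move=> eps_gt0 n_gt0.
under eq_bigl => t do rewrite /sample_mean /avg -mulrBr -sumrB.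
set dev := fun t : {ffun 'I_n -> G} => n%:R^-1 * \sum_i (g (t i) - mean g i).
apply: le_trans (sum_tail_le_second_moment dev eps_gt0 (@tuple_prob_ge0 n)) _.
under eq_bigr do rewrite exprMn mulrCA; rewrite -mulr_sumr.
rewrite (_ : _ / _ = eps ^- 2 * (n%:R^-1 ^+ 2 * (n%:R * \sum_x g x ^+ 2))); last first.
  by field; rewrite gt_eqF ?ltr0n ?(gt_eqF eps_gt0).
rewrite ler_wpM2l ?invr_ge0 ?sqr_ge0 // ler_wpM2l ?exprn_ge0 ?invr_ge0 //.
exact: sum_tuple_prob_sqr_centered_sum.
Qed.

Section RatioEstimator.
Variables (g : G -> R) (w : nat -> R) (c b th : R) (est : nat -> T -> R).
Hypothesis mean_gE : forall i, mean g i = c * w i.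
Hypothesis est_E :
  forall n s, est n s = th + b * (sample_mean g (sample n s) / avg w n - c).

Lemma ratio_tail_le n (eps nu : R) : 0 < eps -> nu != 0 -> (0 < n)%N ->
  `|nu| / 2 < `|avg w n| ->
  (P [set s | (eps <= `|est n s - th|)%R] <=
   ((\sum_x g x ^+ 2) / (n%:R * (eps * `|nu| / (2 * (`|b| + 1))) ^+ 2))%:E)%E.
Proof.
move=> eps_gt0 nu_neq0 n_gt0 avg_gt.
have eps'_gt0 : 0 < eps * `|nu| / (2 * (`|b| + 1)).
  by rewrite divr_gt0 ?mulr_gt0 ?normr_gt0 ?ltr_pwDr ?normr_ge0.
rewrite (_ : [set s | _] =
    [set s | eps <= `|b * (sample_mean g (sample n s) / avg w n - c)|]); last first.
  by apply/seteqP; split => s /=; rewrite est_E [th + _]addrC addrK.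
rewrite (prob_sample_pred (fun t => eps <= `|b * (sample_mean g t / avg w n - c)|)).
rewrite lee_fin; apply: le_trans (sample_mean_tail_le g eps'_gt0 n_gt0).
rewrite [leRHS]big_mkcond [leLHS]big_mkcond /=; apply: ler_sum => t _.
rewrite (_ : avg (mean g) n = c * avg w n); last first.
  rewrite /avg mulrCA; congr (_ * _).
  by rewrite mulr_sumr; apply: eq_bigr => i _; apply: mean_gE.
case: ifP => [/(le_deviation_ratio eps_gt0 avg_gt) -> //|_].
by case: ifP; rewrite ?tuple_prob_ge0.
Qed.

Lemma ratio_cvg_in_prob (nu : R) :
  nu != 0 -> avg w n @[n --> \oo] --> nu -> cvg_in_prob P est th.
Proof.
move=> nu_neq0 avg_w eps eps_gt0.
pose eps' := eps * `|nu| / (2 * (`|b| + 1)).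
have eps'_gt0 : 0 < eps'.
  by rewrite /eps' divr_gt0 ?mulr_gt0 ?normr_gt0 ?ltr_pwDr ?normr_ge0.
pose C := (\sum_x g x ^+ 2) / eps' ^+ 2.
apply: (@squeeze_cvge _ _ _ _ (cst 0%E) _ (fun n => (C * n%:R^-1)%:E)).
- have avg_near := cvgr_dist_lt _ _ avg_w (`|nu| / 2) _.
  near=> n; rewrite measure_ge0 /=.
  have n_gt0 : (0 < n)%N by near: n; exists 1%N.
  have avg_gt : `|nu| / 2 < `|avg w n|.
    have : `|nu - avg w n| < `|nu| / 2.
      by near: n; apply: avg_near; rewrite divr_gt0 ?normr_gt0.
    by have := ler_normD (nu - avg w n) (avg w n); rewrite subrK; lra.
  rewrite /C -mulrA -invfM [eps' ^+ 2 * _]mulrC.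
  exact: ratio_tail_le.
- exact: cvg_cst.
- apply: cvg_EFin; first by near=> n.
  by rewrite -(mulr0 C); apply: cvgM; [apply: cvg_cst | apply: cvg_invn].
Unshelve. all: by end_near.
Qed.

End RatioEstimator.

End IndependentSample.

Definition genotype_code (x : genotype) : nat :=
  match x with
  | G0000 => 0 | G1111 => 1 | G1101 => 2 | G0111 => 3 | G0101 => 4
  | G1100 => 5 | G0011 => 6 | G0100 => 7 | G0001 => 8
  end%N.

Definition genotype_decode (n : nat) : option genotype :=
  match n with
  | 0 => Some G0000 | 1 => Some G1111 | 2 => Some G1101 | 3 => Some G0111
  | 4 => Some G0101 | 5 => Some G1100 | 6 => Some G0011 | 7 => Some G0100
  | 8 => Some G0001 | _ => None
  end%N.

Lemma genotype_codeK : pcancel genotype_code genotype_decode.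
Proof. by case. Qed.

HB.instance Definition _ := Countable.copy genotype (pcan_type genotype_codeK).

Definition genotype_enum :=
  [:: G0000; G1111; G1101; G0111; G0101; G1100; G0011; G0100; G0001].

Lemma genotype_enumP : finite_axiom genotype_enum.
Proof. by case. Qed.

HB.instance Definition _ := fintype.isFinite.Build genotype (@genotype_enumP).

Lemma sum_genotype (V : nmodType) (F : genotype -> V) :
  \sum_x F x = F G0000 + F G1111 + F G1101 + F G0111 + F G0101 + F G1100
               + F G0011 + F G0100 + F G0001.
Proof. by rewrite /index_enum !unlock /= !addrA addr0. Qed.

(* The listed frequencies sum to 1 only if [Delta 8 * p^2 (1 - p) = 0], which the
   hypotheses therefore force; the means of score1, score2A, score2B rely on it. *)
Lemma sum_freq (R : realType) (D : nat -> R) p :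
  \sum_x freq D p x = \sum_(1 <= k < 10) D k - D 8%N * (p ^+ 2 * (1 - p)).
Proof. by rewrite sum_genotype /index_iota /= !big_cons big_nil /=; ring. Qed.

Lemma prob_sum9_delta1 (R : realType) (D : nat -> R) :
  \sum_(1 <= k < 10) D k = 1 ->
  D 1%N = 1 - (D 2%N + D 3%N + D 4%N + D 5%N + D 6%N + D 7%N + D 8%N + D 9%N).
Proof. by rewrite /index_iota /= !big_cons big_nil; lra. Qed.

Lemma indic_preimage1 (T : Type) (R : realType) (S : eqType) (Y : T -> S) x w :
  (\1_(Y @^-1` [set x]) w : R) = (Y w == x)%:R.
Proof. by rewrite indicE; case: eqP => Yw; [rewrite mem_set | rewrite memNset]. Qed.

Lemma sample_mean_fhat d (T : measurableType d) (R : realType)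
    (X : nat -> T -> genotype) n (g : genotype -> R) w :
  sample_mean g (sample X n w) = \sum_x g x * fhat R X n x w.
Proof.
rewrite /sample_mean /fhat; under [RHS]eq_bigr do rewrite mulrCA mulr_sumr.
rewrite -mulr_sumr exchange_big /=; congr (_ * _); apply: eq_bigr => i _.
rewrite ffunE (bigD1 (X i w)) //= big1 ?addr0 => [|x /negbTE Xx].
  by rewrite indic_preimage1 eqxx mulr1.
by rewrite indic_preimage1 eq_sym Xx mulr0.
Qed.

Section Scores.
Variable R : realType.

Definition score1 (x : genotype) : R :=
  match x with
  | G1101 | G0100 | G0111 | G0001 | G0101 => 4^-1
  | G1100 | G0011 => 2^-1
  | _ => 0
  end.
Definition score2A (x : genotype) : R :=
  match x with G0111 | G0101 | G0100 => 2^-1 | _ => 0 end.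
Definition score2B (x : genotype) : R :=
  match x with G1101 | G0101 | G0001 => 2^-1 | _ => 0 end.
Definition score3 (x : genotype) : R :=
  match x with G0100 | G0001 => 4^-1 | G0111 | G1101 => - 4^-1 | _ => 0 end.
Definition score4 (x : genotype) : R :=
  match x with G1100 => 2^-1 | G0011 => - 2^-1 | _ => 0 end.

Variables (d : measure_display) (T : measurableType d) (X : nat -> T -> genotype).

Lemma tau1_sample_mean n w : tau1 R X n w = sample_mean score1 (sample X n w).
Proof. by rewrite sample_mean_fhat sum_genotype /tau1 /tau1A /tau1B /=; field. Qed.
Lemma tau2A_sample_mean n w : tau2A R X n w = sample_mean score2A (sample X n w).
Proof. by rewrite sample_mean_fhat sum_genotype /tau2A /=; field. Qed.
Lemma tau2B_sample_mean n w : tau2B R X n w = sample_mean score2B (sample X n w).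
Proof. by rewrite sample_mean_fhat sum_genotype /tau2B /=; field. Qed.
Lemma tau3_sample_mean n w : tau3 R X n w = sample_mean score3 (sample X n w).
Proof. by rewrite sample_mean_fhat sum_genotype /tau3 /=; field. Qed.
Lemma tau4_sample_mean n w : tau4 R X n w = sample_mean score4 (sample X n w).
Proof. by rewrite sample_mean_fhat sum_genotype /tau4 /=; field. Qed.

Variables (D : nat -> R) (p : R).
Hypothesis D_sum : \sum_(1 <= k < 10) D k = 1.

Lemma freq_mean_score3 :
  \sum_x freq D p x * score3 x = (1 - theta3 D) * (p * (1 - p) * (1 - 2 * p)).
Proof. by rewrite sum_genotype /theta3 (prob_sum9_delta1 D_sum) /=; field. Qed.

Lemma freq_mean_score4 :
  \sum_x freq D p x * score4 x = theta4 D * (p * (1 - p) * (1 - 2 * p)).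
Proof. by rewrite sum_genotype /theta4 /=; field. Qed.

Hypothesis freq_sum : \sum_x freq D p x = 1.

Lemma freq_delta8 : D 8%N * (p ^+ 2 * (1 - p)) = 0.
Proof. by move: freq_sum; rewrite sum_freq D_sum; lra. Qed.

Lemma freq_mean_score1 :
  \sum_x freq D p x * score1 x = (1 - theta1 D) * (p * (1 - p)).
Proof.
transitivity ((1 - theta1 D) * (p * (1 - p)) - 4^-1 * (D 8%N * (p ^+ 2 * (1 - p)))).
  by rewrite sum_genotype /theta1 (prob_sum9_delta1 D_sum) /=; field.
by rewrite freq_delta8 mulr0 subr0.
Qed.

Lemma freq_mean_score2A :
  \sum_x freq D p x * score2A x = (1 - theta2A D) * (p * (1 - p)).
Proof.
transitivity ((1 - theta2A D) * (p * (1 - p)) - 2^-1 * (D 8%N * (p ^+ 2 * (1 - p)))).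
  by rewrite sum_genotype /theta2A (prob_sum9_delta1 D_sum) /=; field.
by rewrite freq_delta8 mulr0 subr0.
Qed.

Lemma freq_mean_score2B :
  \sum_x freq D p x * score2B x = (1 - theta2B D) * (p * (1 - p)).
Proof.
transitivity ((1 - theta2B D) * (p * (1 - p)) - 2^-1 * (D 8%N * (p ^+ 2 * (1 - p)))).
  by rewrite sum_genotype /theta2B (prob_sum9_delta1 D_sum) /=; field.
by rewrite freq_delta8 mulr0 subr0.
Qed.

End Scores.

Theorem theorem5 (d : measure_display) (T : measurableType d) (R : realType)
  (P : probability T R) (Delta : nat -> R) (p : nat -> R)
  (X : nat -> T -> genotype) (nu2 nu3 : R) :
  prob_vector9 Delta ->
  (forall i, 0 <= p i <= 1) ->
  discrete_RVs X ->
  mutually_independent P X ->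
  (forall i x, P (X i @^-1` [set x]) = (freq Delta (p i) x)%:E) ->
  nu2 != 0 -> nu3 != 0 ->
  nubar2 p n @[n --> \oo] --> nu2 ->
  nubar3 p n @[n --> \oo] --> nu3 ->
  [/\ cvg_in_prob P (theta1hat p X) (theta1 Delta),
      cvg_in_prob P (theta2Ahat p X) (theta2A Delta),
      cvg_in_prob P (theta2Bhat p X) (theta2B Delta),
      cvg_in_prob P (theta3hat p X) (theta3 Delta) &
      cvg_in_prob P (theta4hat p X) (theta4 Delta)].
Proof.
move=> [_ D_sum] _ X_meas X_indep X_mass nu2_neq0 nu3_neq0 nu2_cvg nu3_cvg.
have freq_sum i : \sum_x freq Delta (p i) x = 1 := sum_mass X_meas X_mass i.
pose w2 i := p i * (1 - p i); pose w3 i := p i * (1 - p i) * (1 - 2 * p i).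
split.
- apply: (ratio_cvg_in_prob X_meas X_indep X_mass (w := w2) (c := 1 - theta1 Delta)
    (b := -1) _ _ nu2_neq0 nu2_cvg) => [i|n w]; first exact: freq_mean_score1.
  by rewrite /theta1hat tau1_sample_mean /nubar2 /avg /w2; ring.
- apply: (ratio_cvg_in_prob X_meas X_indep X_mass (w := w2) (c := 1 - theta2A Delta)
    (b := -1) _ _ nu2_neq0 nu2_cvg) => [i|n w]; first exact: freq_mean_score2A.
  by rewrite /theta2Ahat tau2A_sample_mean /nubar2 /avg /w2; ring.
- apply: (ratio_cvg_in_prob X_meas X_indep X_mass (w := w2) (c := 1 - theta2B Delta)
    (b := -1) _ _ nu2_neq0 nu2_cvg) => [i|n w]; first exact: freq_mean_score2B.
  by rewrite /theta2Bhat tau2B_sample_mean /nubar2 /avg /w2; ring.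
- apply: (ratio_cvg_in_prob X_meas X_indep X_mass (w := w3) (c := 1 - theta3 Delta)
    (b := -1) _ _ nu3_neq0 nu3_cvg) => [i|n w]; first exact: freq_mean_score3.
  by rewrite /theta3hat tau3_sample_mean /nubar3 /avg /w3; ring.
- apply: (ratio_cvg_in_prob X_meas X_indep X_mass (w := w3) (c := theta4 Delta)
    (b := 1) _ _ nu3_neq0 nu3_cvg) => [i|n w]; first exact: freq_mean_score4.
  by rewrite /theta4hat tau4_sample_mean /nubar3 /avg /w3; ring.
Qed.
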